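(* Let $0<n<\omega$, $k\ge2$, let $(C;\leq_0,\ldots,\leq_{n-1})$ be an $n$-preorder, $A:C\to\bar k$, and $F\in\mathcal{F}_k(n)$. Then $A\in\mathcal{C}(F)$ if and only if $T\leq_hF$ for every $T\in\mathcal{T}_k(n)$ with $T\leq_h (C;\leq_0,\ldots,\leq_{n-1},A)$.
   Context: $\bar k=\{0,\dots,k-1\}$. An $n$-preorder is a set $C$ with preorders $\le_0,\dots,\le_{n-1}$ such that $x\le_{i+1}y$ implies $x\equiv_i y$ (where $\equiv_i$ is the equivalence induced by $\le_i$). Its associated $n$-base is $\mathcal C=(\mathcal C_0,\dots,\mathcal C_{n-1})$, $\mathcal C_i$ = the family of $\le_i$-up subsets of $C$. Restricting to an $\equiv_0$-class $[c]_0$ gives the $(n-1)$-preorder $([c]_0;\le_1,\dots,\le_{n-1})$. Forests/trees: a forest is represented as a finite $F\subseteq\omega^+$ closed under nonempty prefixes, ordered by prefix; a tree as a finite prefix-closed $V\subseteq\omega^*$. For a preorder $Q$, $Q$-forests/trees carry labelings into $Q$, and $(P,c)\le_h(P',c')$ iff there is a monotone $\varphi:P\to P'$ with $c(x)\le c'(\varphi(x))$. $\mathcal T_k(0)=\bar k$ (antichain), $\mathcal T_k(m+1)$ = $\mathcal T_k(m)$-trees with $\le_h$; $\mathcal F_k(n)$ is the set of $\mathcal T_k(n-1)$-forests with $\le_h$. $T\le_h(C;\le_0,\dots,\le_{n-1},A)$ for $(T,t)\in\mathcal T_k(n)$ is defined recursively: for $n=1$, there is a monotone $\varphi:T\to(C;\le_0)$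 with $t(\tau)=A(\varphi(\tau))$ for all $\tau$; for $n>1$, there is a monotone $\varphi:T\to(C;\le_0)$ with $t(\tau)\le_h([\varphi(\tau)]_0;\le_1,\dots,\le_{n-1},A|_{[\varphi(\tau)]_0})$ for all $\tau\in T$. Fine hierarchy: for an $n$-base $\mathcal L=(\mathcal L_0,\dots,\mathcal L_{n-1})$ in a set $S$ (families closed under finite $\cup,\cap$, containing $\emptyset,S$) and $(F,c)\in\mathcal F_k(n)$, an $F$-family over $\mathcal L$ is $\{U_\tau\}_{\tau\in F}$ with $U_\tau\in\mathcal L_0$, $U_{\tau i}\subseteq U_\tau$, $\bigcup U_\tau=S$, together with (if $n>1$) for each $\tau$ a $c(\tau)$-family over the $(n-1)$-base $(\{\tilde U_\tau\cap B:B\in\mathcal L_1\},\dots,\{\tilde U_\tau\cap B:B\in\mathcal L_{n-1}\})$ in $\tilde U_\tau$, where $\tilde U_\tau=U_\tau\setminus\bigcup_{\tau i\in F}U_{\tau i}$ (for trees the same definition with $V\subseteq\omega^*$). It determines $A:S\to\bar k$ if: for $n=1$, $A(x)=c(\tau)$ whenever $x\in\tilde U_\tau$; for $n>1$, for every $\tau$, $A|_{\tilde U_\tau}$ is determined by the $c(\tau)$-family attached to $\tau$. $\mathcal C(F)$ is the set of $A:C\to\bar k$ determined by some $F$-family over the $n$-base $\mathcal C$. *)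

From mathcomp Require Import all_boot.
Unset Printing Implicit Defensive.

Definition is_tree (V : seq (seq nat)) : Prop :=
  [::] \in V /\ (forall s t : seq nat, s ++ t \in V -> s \in V).

Definition is_forest (F : seq (seq nat)) : Prop :=
  [::] \notin F /\ (forall s t : seq nat, s != [::] -> s ++ t \in F -> s \in F).

(* Q-labelled trees and forests (labels only matter on the nodes). *)
Record ltree (Q : Type) := LTree {
  lt_nodes : seq (seq nat); lt_label : seq nat -> Q; lt_tree : is_tree lt_nodes }.
Record lforest (Q : Type) := LForest {
  lf_nodes : seq (seq nat); lf_label : seq nat -> Q; lf_forest : is_forest lf_nodes }.
Arguments lt_nodes {Q}. Arguments lt_label {Q}. Arguments lt_tree {Q}.
Arguments lf_nodes {Q}. Arguments lf_label {Q}. Arguments lf_forest {Q}.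

Definition hle {Q : Type} (leQ : Q -> Q -> Prop)
  (P : seq (seq nat)) (c : seq nat -> Q) (P' : seq (seq nat)) (c' : seq nat -> Q) : Prop :=
  exists phi : seq nat -> seq nat,
    (forall x, x \in P -> phi x \in P') /\
    (forall x y, x \in P -> y \in P -> prefix x y -> prefix (phi x) (phi y)) /\
    (forall x, x \in P -> leQ (c x) (c' (phi x))).

Fixpoint Tk (k m : nat) : Type :=
  match m with 0 => 'I_k | m'.+1 => ltree (Tk k m') end.

Fixpoint leh (k m : nat) : Tk k m -> Tk k m -> Prop :=
  match m return Tk k m -> Tk k m -> Prop with
  | 0 => fun a b => a = b
  | m'.+1 => fun T T' => hle (leh k m') (lt_nodes T) (lt_label T) (lt_nodes T') (lt_label T')
  end.

Definition hle_TF (k m : nat) (T : ltree (Tk k m)) (F : lforest (Tk k m)) : Prop :=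
  hle (leh k m) (lt_nodes T) (lt_label T) (lf_nodes F) (lf_label F).

Section Preorders.
Variables (C : Type) (le : nat -> C -> C -> Prop).

Definition equiv (i : nat) (x y : C) : Prop := le i x y /\ le i y x.

Definition npreorder (n : nat) : Prop :=
  (forall i, i < n -> (forall x, le i x x) /\
                      (forall x y z, le i x y -> le i y z -> le i x z)) /\
  (forall i, i.+1 < n -> forall x y, le i.+1 x y -> equiv i x y).

Variables (k : nat) (A : C -> 'I_k).

(* T <=_h (D; le j, le (j+1), ..., A|D) for T in T_k(m+1), where D is the
   current subset (an iterated equivalence class) of C. *)
Fixpoint tle_pre (m : nat) : nat -> (C -> Prop) -> Tk k m.+1 -> Prop :=
  match m return nat -> (C -> Prop) -> Tk k m.+1 -> Prop with
  | 0 => fun j D T =>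
      exists phi : seq nat -> C,
        (forall x, x \in lt_nodes T -> D (phi x)) /\
        (forall x y, x \in lt_nodes T -> y \in lt_nodes T -> prefix x y ->
                     le j (phi x) (phi y)) /\
        (forall x, x \in lt_nodes T -> lt_label T x = A (phi x))
  | m'.+1 => fun j D T =>
      exists phi : seq nat -> C,
        (forall x, x \in lt_nodes T -> D (phi x)) /\
        (forall x y, x \in lt_nodes T -> y \in lt_nodes T -> prefix x y ->
                     le j (phi x) (phi y)) /\
        (forall x, x \in lt_nodes T ->
           tle_pre m' j.+1 (fun y => D y /\ equiv j (phi x) y) (lt_label T x))
  end.

Definition tle (n : nat) (T : ltree (Tk k n.-1)) : Prop :=
  tle_pre (n.-1) 0 (fun _ => True) T.

Definition upbase (i : nat) (X : C -> Prop) : Prop :=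
  forall x y, X x -> le i x y -> X y.

Definition relbase (L : nat -> (C -> Prop) -> Prop) (W : C -> Prop)
  (i : nat) (X : C -> Prop) : Prop :=
  exists B, L i.+1 B /\ forall x, X x <-> W x /\ B x.

Definition tilde (P : seq (seq nat)) (U : seq nat -> C -> Prop) (t : seq nat) (x : C) : Prop :=
  U t x /\ ~ (exists i, rcons t i \in P /\ U (rcons t i) x).

Definition family_ok (L : nat -> (C -> Prop) -> Prop) (S : C -> Prop)
  (P : seq (seq nat)) (U : seq nat -> C -> Prop) : Prop :=
  (forall t, t \in P -> L 0 (U t)) /\
  (forall t i x, t \in P -> rcons t i \in P -> U (rcons t i) x -> U t x) /\
  (forall x, S x <-> exists t, t \in P /\ U t x).

Fixpoint determ (m : nat) : (nat -> (C -> Prop) -> Prop) -> (C -> Prop) ->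
    seq (seq nat) -> (seq nat -> Tk k m) -> Prop :=
  match m return (nat -> (C -> Prop) -> Prop) -> (C -> Prop) ->
                 seq (seq nat) -> (seq nat -> Tk k m) -> Prop with
  | 0 => fun L S P c =>
      exists U : seq nat -> C -> Prop, family_ok L S P U /\
        (forall t, t \in P -> forall x, tilde P U t x -> A x = c t)
  | m'.+1 => fun L S P c =>
      exists U : seq nat -> C -> Prop, family_ok L S P U /\
        (forall t, t \in P ->
           determ m' (relbase L (tilde P U t)) (tilde P U t)
                  (lt_nodes (c t)) (lt_label (c t)))
  end.

(* A ∈ 𝒞(F) for F ∈ F_k(n) = T_k(n-1)-forests. *)
Definition inCF (n : nat) (F : lforest (Tk k n.-1)) : Prop :=
  determ (n.-1) upbase (fun _ => True) (lf_nodes F) (lf_label F).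

End Preorders.

From Pilot Require Import Defs.
From mathcomp Require Import all_boot zify.
From Stdlib Require Import ClassicalEpsilon.

(* If a family {U_t} determines A, every point of C lies in a minimal piece
   U~_t, and since the U_t are up-sets one can choose these pieces coherently
   along the branches of a tree T <=_h C: this is a monotone map of T into F.
   Labels are then compared one level down, inside U~_t, which is closed under
   the equivalence of the current level.
   Conversely, put x into U_t when every tree below the cone above x embeds
   into F above t.  If some x lay in no U_t, or lay in U~_t with an admissible
   label not below c(t), grafting the trees witnessing this under one root
   would give a tree below C that does not embed into F. *)

Set Implicit Arguments.
Unset Strict Implicit.

Lemma is_tree_rcons (V : seq (seq nat)) x i :
  is_tree V -> rcons x i \in V -> x \in V.
Proof. by case=> _ closedV; rewrite -cats1 => /closedV. Qed.

Lemma tree_lift (V : seq (seq nat)) (R : seq nat -> seq nat -> Prop) :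
  is_tree V -> (exists t, R [::] t) ->
  (forall x i t, rcons x i \in V -> R x t -> exists2 t', prefix t t' & R (rcons x i) t') ->
  exists psi : seq nat -> seq nat, (forall x, x \in V -> R x (psi x)) /\
    (forall x y, x \in V -> y \in V -> prefix x y -> prefix (psi x) (psi y)).
Proof.
move=> treeV [t0 Rt0] step.
pose spec x i t t' := prefix t t' /\ R (rcons x i) t'.
pose next x i t := epsilon (inhabits t) (spec x i t).
have nextP x i t : rcons x i \in V -> R x t ->
    prefix t (next x i t) /\ R (rcons x i) (next x i t).
  move=> xiV Rxt; apply: (epsilon_spec _ (spec x i t)).
  by have [t' ? ?] := step x i t xiV Rxt; exists t'.
pose fix lift rx := if rx is i :: rx' then next (rev rx') i (lift rx') else t0.
pose psi x := lift (rev x).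
have psi_rcons x i : psi (rcons x i) = next x i (psi x).
  by rewrite /psi rev_rcons /= revK.
have psiR x : x \in V -> R x (psi x).
  elim/last_ind: x => [|x i IH] xiV //.
  by rewrite psi_rcons; apply: (nextP _ _ _ xiV (IH (is_tree_rcons treeV xiV))).2.
exists psi; split=> // x y xV yV /prefixP [w eq_y]; subst y.
elim/last_ind: w yV => [|w i IH]; first by rewrite cats0 prefix_refl.
rewrite -rcons_cat => xwiV; have xwV := is_tree_rcons treeV xwiV.
rewrite psi_rcons; apply: prefix_trans (IH xwV) _.
exact: (nextP _ _ _ xwiV (psiR _ xwV)).1.
Qed.

Section Grafting.
Variable Q : Type.
Implicit Types (l : Q) (g : nat -> ltree Q) (T : ltree Q).

Lemma is_tree_root : is_tree [:: [::]].
Proof.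
split=> [|s t]; first by rewrite mem_seq1.
by rewrite !mem_seq1 => /eqP/(congr1 size); rewrite size_cat; case: s.
Qed.

Definition tsingle l : ltree Q := LTree Q [:: [::]] (fun _ => l) is_tree_root.

Definition graft_nodes r g : seq (seq nat) :=
  [::] :: flatten [seq map (cons i) (lt_nodes (g i)) | i <- iota 0 r].

Lemma graft_nodes_root r g : [::] \in graft_nodes r g.
Proof. exact: mem_head. Qed.

Lemma graft_nodes_cons r g i w :
  (i :: w \in graft_nodes r g) <-> i < r /\ w \in lt_nodes (g i).
Proof.
rewrite in_cons /=; split.
- by case/flattenP=> _ /mapP [i' i'r ->] /mapP [w' w'g [-> ->]]; rewrite mem_iota in i'r.
- move=> [ir wg]; apply/flattenP; exists (map (cons i) (lt_nodes (g i))).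
    by apply/mapP; exists i; rewrite // mem_iota.
  exact: map_f.
Qed.

Lemma is_tree_graft r g : is_tree (graft_nodes r g).
Proof.
split=> [|[|i s] t]; rewrite ?graft_nodes_root //.
by rewrite cat_cons => /graft_nodes_cons [ir /(lt_tree (g i)).2 sg]; apply/graft_nodes_cons.
Qed.

Definition graft_label l g u : Q := if u is i :: w then lt_label (g i) w else l.

Definition graft l r g : ltree Q :=
  LTree Q (graft_nodes r g) (graft_label l g) (is_tree_graft r g).

Variable leQ : Q -> Q -> Prop.
Implicit Types (P : seq (seq nat)) (c : seq nat -> Q).

Definition hle_above P c t T : Prop :=
  exists psi : seq nat -> seq nat,
    (forall u, u \in lt_nodes T -> psi u \in P /\ prefix t (psi u)) /\
    (forall u v, u \in lt_nodes T -> v \in lt_nodes T -> prefix u v ->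
                 prefix (psi u) (psi v)) /\
    (forall u, u \in lt_nodes T -> leQ (lt_label T u) (c (psi u))).

Lemma hle_above_nil P c T :
  hle leQ (lt_nodes T) (lt_label T) P c -> hle_above P c [::] T.
Proof. by case=> psi [psiP psi_mono]; exists psi; split=> // u /psiP; rewrite prefix0s. Qed.

Lemma hle_above_prefix P c t t' T :
  prefix t t' -> hle_above P c t' T -> hle_above P c t T.
Proof.
move=> tt' [psi [psiP psi_mono]]; exists psi; split=> // u /psiP [? t'u].
by split=> //; apply: prefix_trans t'u.
Qed.

Lemma hle_above_graft P c t0 l r g :
  hle_above P c t0 (graft l r g) ->
  exists t, [/\ t \in P, prefix t0 t, leQ l (c t) &
                forall i, i < r -> hle_above P c t (g i)].
Proof.
case=> psi [psiP [psi_mono psi_lab]]; have root := graft_nodes_root r g.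
have [rootP t0_root] := psiP _ root.
exists (psi [::]); split=> // [|i ir]; first exact: psi_lab _ root.
have sub w : w \in lt_nodes (g i) -> i :: w \in graft_nodes r g.
  by move=> wg; apply/graft_nodes_cons.
exists (fun w => psi (i :: w)); split; [|split].
- move=> w /sub iw; split; first exact: (psiP _ iw).1.
  exact: psi_mono _ _ root iw (prefix0s _).
- by move=> u v /sub iu /sub iv uv; apply: psi_mono; rewrite // prefix_cons eqxx.
- by move=> w /sub; apply: psi_lab.
Qed.

End Grafting.

Section Refinement.
Variables (C : Type) (le : nat -> C -> C -> Prop) (k : nat) (A : C -> 'I_k).

Local Notation equiv := (Defs.equiv C le).
Local Notation upbase := (upbase C le).
Local Notation relbase := (relbase C).
Local Notation tilde := (tilde C).
Local Notation family_ok := (family_ok C).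
Local Notation tle_pre := (tle_pre C le k A).
Local Notation determ := (determ C k A).

Definition label_below m : nat -> (C -> Prop) -> C -> Tk k m -> Prop :=
  match m with
  | 0 => fun j D y l => l = A y
  | m'.+1 => fun j D y l => tle_pre m' j.+1 (fun z => D z /\ equiv j y z) l
  end.

Definition tle_map m j (D : C -> Prop) (T : ltree (Tk k m)) (phi : seq nat -> C) :=
  [/\ forall u, u \in lt_nodes T -> D (phi u),
      forall u v, u \in lt_nodes T -> v \in lt_nodes T -> prefix u v ->
                  le j (phi u) (phi v) &
      forall u, u \in lt_nodes T -> label_below j D (phi u) (lt_label T u)].

Lemma tle_preE m j D (T : ltree (Tk k m)) : tle_pre m j D T <-> exists phi, tle_map j D T phi.
Proof.
by case: m T => [|m] T; split=> [[phi [? [? ?]]]|[phi [? ? ?]]]; exists phi.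
Qed.

Lemma tle_pre_sub m j (D D' : C -> Prop) (T : ltree (Tk k m)) :
  (forall y, D y -> D' y) -> tle_pre m j D T -> tle_pre m j D' T.
Proof.
elim: m j D D' T => [|m IH] j D D' T DD' /tle_preE [phi [phiD phi_mono phi_lab]];
  apply/tle_preE; exists phi; split=> [u /phiD /DD' //|//|u uT].
- exact: phi_lab u uT.
- by apply: IH (phi_lab u uT) => z [? ?]; auto.
Qed.

Lemma label_below_sub m j (D D' : C -> Prop) y (l : Tk k m) :
  (forall z, D z -> equiv j y z -> D' z) ->
  label_below j D y l -> label_below j D' y l.
Proof. by case: m l => //= m l DD'; apply: tle_pre_sub => z [Dz yz]; auto. Qed.

Lemma tle_map_restrict m j D (Q : C -> Prop) (T : ltree (Tk k m)) phi :
  (forall y z, Q y -> equiv j y z -> Q z) ->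
  tle_map j D T phi -> (forall u, u \in lt_nodes T -> Q (phi u)) ->
  tle_map j (fun y => D y /\ Q y) T phi.
Proof.
move=> Q_equiv [phiD phi_mono phi_lab] phiQ; split=> [u uT|//|u uT]; first by auto.
apply: label_below_sub (phi_lab u uT) => z Dz uz; split=> //.
exact: Q_equiv (phiQ u uT) uz.
Qed.

Definition piece_determ m (L : nat -> (C -> Prop) -> Prop) P U t : Tk k m -> Prop :=
  match m with
  | 0 => fun l => forall x, tilde P U t x -> A x = l
  | m'.+1 => fun l => determ m' (relbase L (tilde P U t)) (tilde P U t)
                        (lt_nodes l) (lt_label l)
  end.

Lemma determE m L S P c : determ m L S P c <->
  exists U, family_ok L S P U /\ forall t, t \in P -> piece_determ L P U t (c t).
Proof. by case: m c => [|m] c; split. Qed.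

Definition induced_base (L : nat -> (C -> Prop) -> Prop) j (S : C -> Prop) :=
  forall i X, L i X <-> exists B, upbase (i + j) B /\ forall x, X x <-> S x /\ B x.

Lemma induced_base_upbase : induced_base upbase 0 (fun _ => True).
Proof.
move=> i X; rewrite addn0; split=> [upX|[B [upB eqX]] x y Xx xy].
  by exists X; split=> // x; split=> // -[].
by apply/eqX; split=> //; apply: upB xy; case/eqX: Xx.
Qed.

Lemma induced_base_relbase L j S (W : C -> Prop) :
  induced_base L j S -> (forall y, W y -> S y) ->
  induced_base (relbase L W) j.+1 W.
Proof.
move=> baseL WS i X; rewrite -addSnnS; split.
- case=> B [/baseL [B' [upB' eqB]] eqX]; exists B'; split=> // x.
  by rewrite eqX eqB; intuition.
- case=> B [upB eqX]; exists (fun x => S x /\ B x); split.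
    by apply/baseL; exists B.
  by move=> x; rewrite eqX; intuition.
Qed.

Lemma tilde_below P U t x :
  t \in P -> U t x -> exists t', [/\ t' \in P, prefix t t' & tilde P U t' x].
Proof.
pose N := \max_(u <- P) size u.
have sizeP u : u \in P -> size u <= N by move=> uP; apply: leq_bigmax_seq.
have [d] := ubnP (N - size t); elim: d t => // d IH t dt tP Utx.
have [[i [tiP Utix]]|nochild] := classic (exists i, rcons t i \in P /\ U (rcons t i) x).
  have /sizeP := tiP; rewrite size_rcons => tiN.
  have [|t' [t'P tit' t'x]] := IH (rcons t i) _ tiP Utix; first by rewrite size_rcons; lia.
  by exists t'; split=> //; apply: prefix_trans (prefix_rcons t i) tit'.
by exists t; split; rewrite ?prefix_refl.
Qed.

Section InducedBase.
Variables (L : nat -> (C -> Prop) -> Prop) (j : nat) (S : C -> Prop).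
Hypothesis baseL : induced_base L j S.

Lemma induced_base0_up (X : C -> Prop) x y :
  L 0 X -> X x -> S y -> le j x y -> X y.
Proof.
case/baseL=> B [upB eqX] /eqX [_ Bx] Sy xy.
by apply/eqX; split=> //; apply: upB xy.
Qed.

Lemma induced_base0_restrict (B : C -> Prop) : upbase j B -> L 0 (fun x => S x /\ B x).
Proof. by move=> upB; apply/baseL; exists B. Qed.

Lemma family_lift P U (V : seq (seq nat)) (phi : seq nat -> C) :
  family_ok L S P U -> is_tree V -> (forall u, u \in V -> S (phi u)) ->
  (forall u v, u \in V -> v \in V -> prefix u v -> le j (phi u) (phi v)) ->
  exists psi : seq nat -> seq nat,
    (forall u, u \in V -> psi u \in P /\ tilde P U (psi u) (phi u)) /\
    (forall u v, u \in V -> v \in V -> prefix u v -> prefix (psi u) (psi v)).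
Proof.
move=> [UL [_ cover]] treeV phiS phi_mono.
apply: (tree_lift (R := fun u t => t \in P /\ tilde P U t (phi u)) treeV).
  have [t [tP Ut]] := (cover _).1 (phiS _ treeV.1).
  by have [t' [? _ ?]] := tilde_below tP Ut; exists t'.
move=> u i t uiV [tP [Ut _]]; have uV := is_tree_rcons treeV uiV.
have Ut' : U t (phi (rcons u i)).
  apply: induced_base0_up (UL _ tP) Ut (phiS _ uiV) _.
  exact: phi_mono _ _ uV uiV (prefix_rcons u i).
by have [t' [? ? ?]] := tilde_below tP Ut'; exists t'.
Qed.

Lemma tilde_equiv P U t y z : family_ok L S P U -> t \in P ->
  tilde P U t y -> S z -> equiv j y z -> tilde P U t z.
Proof.
move=> [UL [_ cover]] tP [Uy nochild] Sz [yz zy]; split.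
  exact: induced_base0_up (UL _ tP) Uy Sz yz.
case=> i [tiP Uz]; apply: nochild; exists i; split=> //.
by apply: induced_base0_up (UL _ tiP) Uz _ zy; apply/cover; exists t.
Qed.

End InducedBase.

Lemma determ_hle m : forall j S L P c D (T : ltree (Tk k m)),
  induced_base L j S -> (forall y, D y -> S y) -> determ m L S P c ->
  tle_pre m j D T -> hle (leh k m) (lt_nodes T) (lt_label T) P c.
Proof.
elim: m => [|m IH] j S L P c D T baseL DS /determE [U [famU detU]]
  /tle_preE [phi [phiD phi_mono phi_lab]];
  have [psi [psiP psi_mono]] :=
    family_lift baseL famU (lt_tree T) (fun u uT => DS _ (phiD u uT)) phi_mono;
  exists psi; (split; [by move=> u /psiP [] | split=> // u uT]);
  have [tP tu] := psiP u uT; move: (phi_lab u uT) (detU _ tP) => /=.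
- by move=> -> /(_ _ tu).
- move=> lu detu.
  have WS y : tilde P U (psi u) y -> S y.
    by case=> Uy _; apply/famU.2.2; exists (psi u).
  have DW z : D z /\ equiv j (phi u) z -> tilde P U (psi u) z.
    by case=> Dz uz; exact: (tilde_equiv baseL famU tP tu (DS _ Dz) uz).
  exact: IH _ _ _ _ _ _ _ (induced_base_relbase baseL WS) DW detu lu.
Qed.

Lemma tle_pre_single m j D x (l : Tk k m) :
  le j x x -> D x -> label_below j D x l -> tle_pre m j D (tsingle l).
Proof. by move=> xx Dx lx; apply/tle_preE; exists (fun _ => x); split=> // ? ? /=. Qed.

Lemma tle_pre_graft m j D x (l : Tk k m) r g :
  le j x x -> D x -> (forall y, D y -> le j x y) -> label_below j D x l ->
  (forall i, i < r -> tle_pre m j D (g i)) -> tle_pre m j D (graft l r g).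
Proof.
move=> xx Dx x_min lx gD.
have [phi phiP] : exists phi : nat -> seq nat -> C,
    forall i, i < r -> tle_map j D (g i) (phi i).
  apply: (choice (fun i phi => i < r -> tle_map j D (g i) phi)) => i.
  have [ir|] := ltnP i r; last by exists (fun _ => x).
  by have /tle_preE [phi ?] := gD i ir; exists phi.
apply/tle_preE; exists (fun u => if u is i :: w then phi i w else x); split.
- by case=> [|i w] // /graft_nodes_cons [ir wg]; case: (phiP i ir) => /(_ w wg).
- case=> [|i w] [|i' w'] // iw i'w'.
    case/graft_nodes_cons: i'w' => i'r w'g _; apply: x_min.
    by case: (phiP i' i'r) => /(_ w' w'g).
  rewrite prefix_cons => /andP [/eqP eq_i ww']; subst i'.
  case/graft_nodes_cons: iw => ir wg; case/graft_nodes_cons: i'w' => _ w'g.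
  by case: (phiP i ir) => _ /(_ w w' wg w'g ww').
- by case=> [|i w] // /graft_nodes_cons [ir wg]; case: (phiP i ir) => _ _ /(_ w wg).
Qed.

Variable n : nat.
Hypothesis hC : npreorder C le n.

Lemma preorder_refl j x : j < n -> le j x x.
Proof. by move=> jn; apply: (hC.1 j jn).1. Qed.

Lemma preorder_trans j x y z : j < n -> le j x y -> le j y z -> le j x z.
Proof. by move=> jn; apply: (hC.1 j jn).2. Qed.

Lemma le_succ_equiv j x y : j.+1 < n -> le j.+1 x y -> equiv j x y.
Proof. by move=> jn; apply: (hC.2 j jn). Qed.

Lemma equiv_trans j x y z : j < n -> equiv j x y -> equiv j y z -> equiv j x z.
Proof.
move=> jn [xy yx] [yz zy].
by split; [apply: preorder_trans jn xy yz|apply: preorder_trans jn zy yx].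
Qed.

Lemma label_below_exists m : forall j D x, j + m < n -> D x ->
  exists l : Tk k m, label_below j D x l.
Proof.
elim: m => [|m IH] j D x jmn Dx; first by exists (A x).
have xx : equiv j x x by split; apply: preorder_refl; lia.
have [|l lx] := IH j.+1 (fun z => D z /\ equiv j x z) x _ (conj Dx xx); first lia.
by exists (tsingle l); apply: tle_pre_single lx; [apply: preorder_refl; lia|].
Qed.

Lemma tle_pre_root_class m j W (T : ltree (Tk k m)) : j.+1 < n ->
  tle_pre m j.+1 W T -> exists2 x, W x & tle_pre m j.+1 (fun y => W y /\ equiv j x y) T.
Proof.
move=> j1n /tle_preE [phi phiT]; have root := (lt_tree T).1.
have jn : j < n by lia.
have [phiW phi_mono _] := phiT; exists (phi [::]); first exact: phiW.
apply/tle_preE; exists phi; apply: tle_map_restrict phiT _ => [y z xy yz|u uT].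
  exact: equiv_trans jn xy (le_succ_equiv j1n yz.1).
exact: le_succ_equiv j1n (phi_mono _ _ root uT (prefix0s u)).
Qed.

Section GoodPieces.
Variables (m j : nat) (S : C -> Prop) (L : nat -> (C -> Prop) -> Prop).
Variables (P : seq (seq nat)) (c : seq nat -> Tk k m).
Hypotheses (jmn : j + m < n) (baseL : induced_base L j S).
Hypothesis closedP : forall s u, s != [::] -> s ++ u \in P -> s \in P.
Hypothesis embeds :
  forall T, tle_pre m j S T -> hle (leh k m) (lt_nodes T) (lt_label T) P c.

Definition cone x y := S y /\ le j x y.

Definition good t x :=
  forall T, tle_pre m j (cone x) T -> hle_above (leh k m) P c t T.

Definition good_piece t x := S x /\ good t x.

Lemma cone_self x : S x -> cone x x.
Proof. by split=> //; apply: preorder_refl; lia. Qed.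

Lemma bad_graft x l (Bad : seq nat -> Prop) :
  S x -> label_below j (cone x) x l ->
  (forall u, u \in P -> Bad u -> ~ good u x) ->
  exists M, tle_pre m j (cone x) M /\
    forall t0, hle_above (leh k m) P c t0 M ->
      exists t, [/\ t \in P, prefix t0 t, leh k m l (c t) &
                    forall u, u \in P -> Bad u -> ~ prefix u t].
Proof.
move=> Sx lx bad; have jn : j < n by lia.
have [T TP] : exists T : seq nat -> ltree (Tk k m), forall u,
    tle_pre m j (cone x) (T u) /\
    (u \in P -> Bad u -> ~ hle_above (leh k m) P c u (T u)).
  apply: (choice (fun u T => tle_pre m j (cone x) T /\
                   (u \in P -> Bad u -> ~ hle_above (leh k m) P c u T))) => u.
  have [[uP Bu]|notbad] := classic (u \in P /\ Bad u).
    have [T notT] := not_all_ex_not _ _ (bad u uP Bu).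
    have [Tx nT] := imply_to_and _ _ notT.
    by exists T.
  exists (tsingle l); split; last by move=> uP Bu; case: notbad.
  by apply: tle_pre_single lx; [apply: preorder_refl|apply: cone_self].
exists (graft l (size P) (fun i => T (nth [::] P i))); split.
  apply: tle_pre_graft lx _ => [||y []//|i _].
  - exact: preorder_refl.
  - exact: cone_self.
  - exact: (TP _).1.
move=> t0 M_t0; have [t [tP t0t lt subT]] := hle_above_graft M_t0.
exists t; split=> // u uP Bu ut.
have := subT (index u P); rewrite index_mem nth_index // => /(_ uP) Tu.
exact: (TP u).2 uP Bu (hle_above_prefix ut Tu).
Qed.

Lemma good_cover x : S x -> exists t, t \in P /\ good_piece t x.
Proof.
move=> Sx; apply: NNPP => nocover.
have [l lx] := label_below_exists jmn (cone_self Sx).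
have [M [Mx MP]] := bad_graft (Bad := fun _ => True) Sx lx
  (fun u uP _ gu => nocover (ex_intro _ u (conj uP (conj Sx gu)))).
have MS : tle_pre m j S M by apply: tle_pre_sub Mx => y [].
have [t [tP _ _]] := MP _ (hle_above_nil (embeds MS)).
by move/(_ t tP I); rewrite prefix_refl.
Qed.

Lemma good_family : family_ok L S P good_piece.
Proof.
have jn : j < n by lia.
split; [|split].
- move=> t _; apply: induced_base0_restrict => // x y gx xy T Ty.
  apply: gx; apply: tle_pre_sub Ty => z [Sz yz]; split=> //.
  exact: preorder_trans jn xy yz.
- by move=> t i x _ _ [Sx gx]; split=> // T /gx; apply: hle_above_prefix (prefix_rcons t i).
- by move=> x; split=> [/good_cover|[t [_ []]]]; auto.
Qed.

Lemma good_tilde_label t x l : t \in P -> tilde P good_piece t x ->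
  label_below j (cone x) x l -> leh k m l (c t).
Proof.
move=> tP [[Sx gx] nochild] lx.
have bad u : u \in P -> (exists i, u = rcons t i) -> ~ good u x.
  by move=> uP [i eq_u] gu; apply: nochild; exists i; rewrite -eq_u.
have [M [Mx MP]] := bad_graft Sx lx bad.
have [t' [t'P /prefixP [w eq_t'] lt' nobad]] := MP t (gx M Mx); subst t'.
case: w t'P lt' nobad => [|i w] tiwP lt' nobad; first by rewrite cats0 in lt'.
have tiP : rcons t i \in P.
  by apply: (@closedP _ w); [rewrite -size_eq0 size_rcons|rewrite cat_rcons].
by case: (nobad _ tiP (ex_intro _ i erefl)); rewrite -cat_rcons prefix_prefix.
Qed.

End GoodPieces.

Lemma hle_determ m : forall j S L P c, j + m < n -> induced_base L j S ->
  (forall s u, s != [::] -> s ++ u \in P -> s \in P) ->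
  (forall T, tle_pre m j S T -> hle (leh k m) (lt_nodes T) (lt_label T) P c) ->
  determ m L S P c.
Proof.
elim: m => [|m IH] j S L P c jmn baseL closedP embeds; apply/determE;
  exists (good_piece j S P c); (split=> [|t tP]; first exact: good_family).
- by move=> x xt; apply: (good_tilde_label jmn closedP) tP xt erefl.
- have WS y : tilde P (good_piece j S P c) t y -> S y by case=> -[].
  apply: IH (induced_base_relbase baseL WS) _ _ => [|s u _|T]; first lia.
    exact: (lt_tree (c t)).2.
  case/tle_pre_root_class => [|x Wx Tx]; first lia.
  apply: (good_tilde_label jmn closedP) tP Wx _ => /=.
  by apply: tle_pre_sub Tx => y [Wy xy]; split; [split; [apply: WS|case: xy]|].
Qed.

End Refinement.

Theorem theorem3p8 (n k : nat) (hn : 0 < n) (hk : 2 <= k)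
  (C : Type) (le : nat -> C -> C -> Prop) (hC : npreorder C le n)
  (A : C -> 'I_k) (F : lforest (Tk k n.-1)) :
  inCF C le k A n F <->
  (forall T : ltree (Tk k n.-1), tle C le k A n T -> hle_TF k (n.-1) T F).
Proof.
split=> [CF T TC | embeds].
- exact: determ_hle (induced_base_upbase le) (fun _ _ => I) CF TC.
- apply: (hle_determ hC) (induced_base_upbase le) (lf_forest F).2 embeds.
  by rewrite add0n prednK.
Qed.
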